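(* Let $\Phi$ be an irreducible crystallographic root system with simple system $S$ and positive system $\Phi^+$, let $k$ be a positive integer, let $\mathcal{I}=(I_1,\ldots,I_k)$ be a geometric chain of $k$ ideals in the root poset, and let $\underline{\mathcal{I}}=(\underline{I}_1,\ldots,\underline{I}_{k+1})$ with $\underline{I}_i=I_i$ for $i\le k$ and $\underline{I}_{k+1}=\bigcup_{i+j=k+1}((I_i+I_j)\cap\Phi^+)\cup I_k\cup S$. If $\alpha$ is a rank $r$ indecomposable element of $\mathcal{I}$, then $\alpha$ is a rank $r$ indecomposable element of $\underline{\mathcal{I}}$.
   Context: Root poset: $\Phi^+$ with $\alpha\le\beta$ iff $\beta-\alpha$ is a nonnegative integer combination of $S$; ideals are down-closed subsets. Sumsets: $A+B=\{a+b\mid a\in A,b\in B\}$. An ascending chain $I_1\subseteq\cdots\subseteq I_K$ of ideals, with $J_i=\Phi^+\setminus I_i$, is geometric if $(I_i+I_j)\cap\Phi^+\subseteq I_{i+j}$ for $i,j\in\{0,\ldots,K\}$, $i+j\le K$, and $(J_i+J_j)\cap\Phi^+\subseteq J_{i+j}$ for $i,j\in\{0,\ldots,K\}$, where $I_0=\varnothing$, $J_0=\Phi^+$, $J_i=J_K$ for $i>K$. (In $\underline{I}_{k+1}$, $i,j\in\{0,\ldots,k\}$.) For a chain $\mathcal{I}=(I_1,\ldots,I_K)$, $r_\alpha(\mathcal{I})=\min\{r_1+\cdots+r_m\mid\alpha=\alpha_1+\cdots+\alpha_m,\alpha_i\in I_{r_i},r_i\in\{1,\ldots,K\}\}$, $\infty$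 if none. An element $\alpha\in\Phi^+$ is a rank $r$ indecomposable element of $\mathcal{I}$ (a chain of $K$ ideals, $r\in\{1,\ldots,K\}$) if $\alpha\in I_r$ and (i) $r_\alpha(\mathcal{I})=r$; (ii) $\alpha\notin I_i+I_j$ whenever $i+j=r$ (with $I_0=\varnothing$); (iii) whenever $\beta\in\Phi^+$ and $r_{\alpha+\beta}(\mathcal{I})=t\le K$, then $\beta\in I_{t-r}$. Here $K=k$ for $\mathcal{I}$ and $K=k+1$ for $\underline{\mathcal{I}}$. *)

From mathcomp Require Import all_boot all_order all_algebra.
Set Implicit Arguments. Unset Strict Implicit. Unset Printing Implicit Defensive.
Import Order.TTheory GRing.Theory Num.Theory.
Local Open Scope ring_scope.

Section RootSystems.
Variables (R : realFieldType) (n : nat).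
Local Notation V := 'rV[R]_n.

Definition dotv (u v : V) : R := (u *m v^T) 0 0.

Definition cartan (b a : V) : R := 2 * dotv b a / dotv a a.
Definition reflect_root (a b : V) : V := b - cartan b a *: a.

Definition root_system (Phi : seq V) : Prop :=
  [/\ uniq Phi && ((0 : V) \notin Phi),
      (forall v : V, exists c : ('I_(size Phi) -> R),
          v = \sum_(i < size Phi) c i *: Phi`_i),
      (forall a b, a \in Phi -> b \in Phi -> reflect_root a b \in Phi),
      (forall a b, a \in Phi -> b \in Phi -> exists z : int, cartan b a = z%:~R) &
      (forall a (c : R), a \in Phi -> c *: a \in Phi -> c = 1 \/ c = -1)].

Definition irreducible_rs (Phi : seq V) : Prop :=
  forall P : V -> bool,
    (exists2 a, a \in Phi & P a) -> (exists2 a, a \in Phi & ~~ P a) ->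
    exists a b, [/\ a \in Phi, b \in Phi, P a, ~~ P b & dotv a b != 0].

Definition nncomb (S : seq V) (v : V) : Prop :=
  exists c : ('I_(size S) -> nat), v = \sum_(i < size S) (c i)%:R *: S`_i.

Definition simple_system (Phi S : seq V) : Prop :=
  [/\ uniq S,
      {subset S <= Phi},
      (forall c : ('I_(size S) -> R),
          \sum_(i < size S) c i *: S`_i = 0 -> forall i, c i = 0) &
      (forall a, a \in Phi -> nncomb S a \/ nncomb S (- a))].

Definition pos_roots (Phi S : seq V) (v : V) : Prop := v \in Phi /\ nncomb S v.

Definition root_le (S : seq V) (a b : V) : Prop := nncomb S (b - a).

Definition is_ideal (Phi S : seq V) (I : V -> Prop) : Prop :=
  (forall v, I v -> pos_roots Phi S v) /\
  (forall a b, pos_roots Phi S a -> I b -> root_le S a b -> I a).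

(* a chain of K ideals is I : nat -> V -> Prop, only indices 1..K matter;
   Iz extends it with I_0 = empty. *)
Definition Iz (I : nat -> V -> Prop) (i : nat) (v : V) : Prop :=
  if i is 0 then False else I i v.

(* J_0 = Phi^+, J_i = Phi^+ \ I_i for 1 <= i <= K, J_i = J_K for i > K *)
Definition Jz (Phi S : seq V) (K : nat) (I : nat -> V -> Prop) (i : nat) (v : V)
  : Prop :=
  if i is 0 then pos_roots Phi S v
  else pos_roots Phi S v /\ ~ I (minn i K) v.

Definition chain_of_ideals (Phi S : seq V) (K : nat) (I : nat -> V -> Prop) :=
  (forall i, (1 <= i <= K)%N -> is_ideal Phi S (I i)) /\
  (forall i v, (1 <= i)%N -> (i < K)%N -> I i v -> I i.+1 v).

Definition geometric_chain (Phi S : seq V) (K : nat) (I : nat -> V -> Prop) :=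
  [/\ chain_of_ideals Phi S K I,
      (forall i j a b, (i + j <= K)%N -> Iz I i a -> Iz I j b ->
          pos_roots Phi S (a + b) -> Iz I (i + j) (a + b)) &
      (forall i j a b, (i <= K)%N -> (j <= K)%N -> Jz Phi S K I i a ->
          Jz Phi S K I j b -> pos_roots Phi S (a + b) ->
          Jz Phi S K I (i + j) (a + b))].

Definition rdecomp (K : nat) (I : nat -> V -> Prop) (a : V) (t : nat) : Prop :=
  exists s : seq (V * nat),
    [/\ s != [::],
        (forall p, p \in s -> (1 <= p.2 <= K)%N /\ I p.2 p.1),
        a = \sum_(p <- s) p.1 &
        t = (\sum_(p <- s) p.2)%N].

(* rval K I a o  means  r_a(I) = o, where None stands for infinity *)
Definition rval (K : nat) (I : nat -> V -> Prop) (a : V) (o : option nat)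
  : Prop :=
  match o with
  | Some t => rdecomp K I a t /\ (forall t', rdecomp K I a t' -> (t <= t')%N)
  | None => forall t, ~ rdecomp K I a t
  end.

Definition indecomposable (Phi S : seq V) (K : nat) (I : nat -> V -> Prop)
  (r : nat) (a : V) : Prop :=
  [/\ (1 <= r <= K)%N,
      I r a,
      rval K I a (Some r),
      (forall i j, (i + j)%N = r ->
          ~ exists b c, [/\ Iz I i b, Iz I j c & a = b + c]) &
      (forall b t, pos_roots Phi S b -> pos_roots Phi S (a + b) ->
          rval K I (a + b) (Some t) -> (t <= K)%N -> Iz I (t - r) b)].

Definition underline_chain (Phi S : seq V) (k : nat) (I : nat -> V -> Prop)
  (i : nat) (v : V) : Prop :=
  if (i <= k)%N then I i v
  else if i == k.+1 then
    (exists i1 j1 b c, [/\ [/\ (i1 + j1)%N = k.+1, (i1 <= k)%N & (j1 <= k)%N],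
        Iz I i1 b, Iz I j1 c, v = b + c & pos_roots Phi S v])
    \/ I k v \/ v \in S
  else False.

End RootSystems.

From mathcomp Require Import all_boot all_order all_algebra.
From mathcomp Require Import zify ring.
From Stdlib Require Import Classical.
(* Conditions (i) and (ii) for the extended chain only involve ideals of index
   at most k, where it agrees with I, and so does condition (iii) whenever
   r_(alpha+beta) <= k.  The new case is r_(alpha+beta) = k+1: then
   alpha + beta = gamma + delta with gamma in I_i and delta in I_(k+1-i).
   Since (alpha+beta, gamma+delta) > 0, one of alpha, beta has positive inner
   product with one of gamma, delta, so (say) alpha - gamma = delta - beta is
   0 or a root.  If it is 0, minimality of r gives r <= i and beta = delta is
   in I_(k+1-i), inside I_(k+1-r).  If gamma = alpha + eta, condition (iii)
   for alpha puts eta in I_(t-r) with t <= i, and geometricity puts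
   beta = delta + eta in I_(k+1-r).  If alpha = gamma + eta, beta lies below
   delta; were it outside I_(k+1-r), then eta is outside I_(r-i) by (ii), and
   geometricity of the complements J would put delta = beta + eta outside
   I_(k+1-i). *)

Set Implicit Arguments. Unset Strict Implicit. Unset Printing Implicit Defensive.
Import Order.TTheory GRing.Theory Num.Theory.
Local Open Scope ring_scope.

Section InnerProduct.
Variables (R : realFieldType) (n : nat).
Local Notation V := 'rV[R]_n.

Lemma dotvE (u v : V) : dotv u v = \sum_j u 0 j * v 0 j.
Proof. by rewrite /dotv mxE; apply: eq_bigr => j _; rewrite mxE. Qed.

Lemma dotvC (u v : V) : dotv u v = dotv v u.
Proof. by rewrite !dotvE; apply: eq_bigr => j _; rewrite mulrC. Qed.

Lemma dotv0l (v : V) : dotv 0 v = 0.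
Proof. by rewrite dotvE big1 // => j _; rewrite mxE mul0r. Qed.

Lemma dotvDl (u w v : V) : dotv (u + w) v = dotv u v + dotv w v.
Proof. by rewrite !dotvE -big_split; apply: eq_bigr => j _; rewrite mxE mulrDl. Qed.

Lemma dotvZl c (u v : V) : dotv (c *: u) v = c * dotv u v.
Proof. by rewrite !dotvE mulr_sumr; apply: eq_bigr => j _; rewrite mxE mulrA. Qed.

Lemma dotvBl (u w v : V) : dotv (u - w) v = dotv u v - dotv w v.
Proof. by rewrite dotvDl -scaleN1r dotvZl mulN1r. Qed.

Lemma dotvDr (u w v : V) : dotv v (u + w) = dotv v u + dotv v w.
Proof. by rewrite dotvC dotvDl -!(dotvC v). Qed.

Lemma dotvZr c (u v : V) : dotv v (c *: u) = c * dotv v u.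
Proof. by rewrite dotvC dotvZl dotvC. Qed.

Lemma dotvBr (u w v : V) : dotv v (u - w) = dotv v u - dotv v w.
Proof. by rewrite dotvC dotvBl -!(dotvC v). Qed.

Lemma dotv_suml (T : Type) (s : seq T) (F : T -> V) (v : V) :
  dotv (\sum_(p <- s) F p) v = \sum_(p <- s) dotv (F p) v.
Proof. by elim: s => [|p s IH]; rewrite ?big_nil ?dotv0l // !big_cons dotvDl IH. Qed.

Lemma dotv_ge0 (u : V) : 0 <= dotv u u.
Proof. by rewrite dotvE sumr_ge0 // => j _; rewrite -expr2 sqr_ge0. Qed.

Lemma dotv_gt0 (u : V) : u != 0 -> 0 < dotv u u.
Proof.
move=> u_nz; rewrite lt_def dotv_ge0 andbT; apply: contra u_nz.
rewrite dotvE => /eqP/psumr_eq0P u0; apply/eqP/matrixP => i j; rewrite ord1 mxE.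
have /eqP := u0 (fun j _ => sqr_ge0 (u 0 j)) j isT.
by rewrite mulf_eq0 orbb => /eqP.
Qed.

Lemma dotv_sqr_lt (u v : V) : v != 0 -> (forall c : R, u != c *: v) ->
  dotv u v ^+ 2 < dotv u u * dotv v v.
Proof.
move=> v_nz u_nprop; have vv := dotv_gt0 v_nz.
set w := dotv v v *: u - dotv u v *: v.
have w_nz : w != 0.
  apply: contraNneq (u_nprop (dotv u v / dotv v v)) => /eqP.
  rewrite subr_eq0 => /eqP Ew; apply/eqP.
  by rewrite mulrC -scalerA -Ew scalerA mulVf ?gt_eqF // scale1r.
have := dotv_gt0 w_nz.
have -> : dotv w w = dotv v v * (dotv u u * dotv v v - dotv u v ^+ 2).
  rewrite /w !dotvBl !dotvBr !dotvZl !dotvZr (dotvC v u); ring.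
by rewrite pmulr_rgt0 // subr_gt0.
Qed.

End InnerProduct.

Section RootSystem.
Variables (R : realFieldType) (n : nat) (Phi : seq 'rV[R]_n).
Hypothesis rs : root_system Phi.

Lemma root_neq0 a : a \in Phi -> a != 0.
Proof. by case: rs => /andP[_ Phi0] _ _ _ _; apply: contraTneq => ->. Qed.

Lemma rootN a : a \in Phi -> - a \in Phi.
Proof.
move=> Pa; case: rs => _ _ Prefl _ _; have := Prefl a a Pa Pa.
rewrite /reflect_root /cartan -mulrA mulfV ?gt_eqF ?dotv_gt0 ?root_neq0 //.
by rewrite mulr1 scaler_nat mulr2n opprD addrA subrr sub0r.
Qed.

Lemma root_sub_dot_gt0 a b : a \in Phi -> b \in Phi -> 0 < dotv a b ->
  a - b = 0 \/ a - b \in Phi.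
Proof.
move=> Pa Pb ab_gt0; have [->|a_neq_b] := eqVneq a b; first by left; rewrite subrr.
right; case: rs => _ _ Prefl Pint Preduced.
have aa := dotv_gt0 (root_neq0 Pa); have bb := dotv_gt0 (root_neq0 Pb).
have a_nprop c : a != c *: b.
  apply/eqP => Ea; have /(Preduced _ _ Pb) [c1|cN1] : c *: b \in Phi by rewrite -Ea.
    by move: a_neq_b; rewrite Ea c1 scale1r eqxx.
  by move: ab_gt0; rewrite Ea cN1 dotvZl mulN1r oppr_gt0 ltNge dotv_ge0.
have cs := dotv_sqr_lt (root_neq0 Pb) a_nprop.
have [z1 Ez1] := Pint b a Pb Pa; have [z2 Ez2] := Pint a b Pa Pb.
have z1_gt0 : 0 < z1 by rewrite -(ltr0z R) -Ez1 /cartan divr_gt0 ?mulr_gt0.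
have z2_gt0 : 0 < z2 by rewrite -(ltr0z R) -Ez2 /cartan divr_gt0 ?mulr_gt0 // dotvC.
(* the Cartan integers are positive with product 4 (a,b)^2 / ((a,a)(b,b)) < 4 *)
have z12_lt4 : z1 * z2 < 4.
  rewrite -(ltr_int R) intrM -Ez1 -Ez2 /cartan (dotvC b a).
  have -> : 2 * dotv a b / dotv b b * (2 * dotv a b / dotv a a)
      = 4 * (dotv a b ^+ 2 / (dotv a a * dotv b b)) by field; rewrite !gt_eqF.
  by rewrite gtr_pMr // ltr_pdivrMr ?mul1r ?mulr_gt0.
have [z1_1|z2_1] : z1 = 1 \/ z2 = 1 by lia.
  by have := Prefl b a Pb Pa; rewrite /reflect_root Ez1 z1_1 scale1r.
by have := rootN (Prefl a b Pa Pb); rewrite /reflect_root Ez2 z2_1 scale1r opprB.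
Qed.

End RootSystem.

Section SimpleSystem.
Variables (R : realFieldType) (n : nat) (Phi S : seq 'rV[R]_n).
Hypotheses (rs : root_system Phi) (ss : simple_system Phi S).
Local Notation V := 'rV[R]_n.
Local Notation pos := (pos_roots Phi S).

Lemma nncomb0 : nncomb S 0.
Proof. by exists (fun=> 0%N); rewrite big1 // => i _; rewrite scale0r. Qed.

Lemma nncombD a b : nncomb S a -> nncomb S b -> nncomb S (a + b).
Proof.
move=> [c ->] [d ->]; exists (fun i => c i + d i)%N.
by rewrite -big_split; apply: eq_bigr => i _; rewrite natrD scalerDl.
Qed.

Lemma nncomb_sum (T : eqType) (s : seq T) (F : T -> V) :
  (forall p, p \in s -> nncomb S (F p)) -> nncomb S (\sum_(p <- s) F p).
Proof. by move=> sF; rewrite big_seq; apply: big_ind; [exact: nncomb0|exact: nncombD|]. Qed.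

Lemma nncomb_inj (c d : 'I_(size S) -> nat) :
  \sum_i (c i)%:R *: S`_i = \sum_i (d i)%:R *: S`_i -> forall i, c i = d i.
Proof.
move=> /eqP; rewrite -subr_eq0 -sumrB => /eqP cd0 i; case: ss => _ _ Sfree _.
have /Sfree/(_ i)/eqP : \sum_i ((c i)%:R - (d i)%:R : R) *: S`_i = 0.
  by rewrite -[RHS]cd0; apply: eq_bigr => j _; rewrite scalerBl.
by rewrite subr_eq0 eqr_nat => /eqP.
Qed.

Lemma nncomb_add_eq0 a b : nncomb S a -> nncomb S b -> a + b = 0 -> a = 0.
Proof.
move=> [c ->] [d ->] cd0.
have cd_0 := @nncomb_inj (fun i => c i + d i)%N (fun=> 0%N).
rewrite big1 // => i _; suff -> : c i = 0%N by rewrite scale0r.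
suff: (c i + d i = 0)%N by lia.
apply: cd_0; rewrite [RHS]big1 => [|j _]; last by rewrite scale0r.
by rewrite -[RHS]cd0 -big_split; apply: eq_bigr => j _; rewrite natrD scalerDl.
Qed.

Lemma nncomb_addS a b : nncomb S a -> nncomb S b -> a + b \in S -> a = 0 \/ b = 0.
Proof.
move=> [c Ea] [d Eb] abS; have j_lt : (index (a + b)%R S < size S)%N by rewrite index_mem.
pose j := Ordinal j_lt.
have Sj : S`_j = \sum_i (nat_of_bool (i == j))%:R *: S`_i.
  rewrite (bigD1 j) //= eqxx scale1r big1 ?addr0 // => i /negPf ->.
  exact: scale0r.
have cd i : (c i + d i = (i == j))%N.
  apply: (@nncomb_inj (fun i => c i + d i)%N (fun i => nat_of_bool (i == j))).
  rewrite -Sj nth_index // Ea Eb -big_split /=.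
  by apply: eq_bigr => k _; rewrite natrD scalerDl.
have [cj0|cj_gt0] := posnP (c j); [left; rewrite Ea | right; rewrite Eb].
  rewrite big1 // => i _; suff -> : c i = 0%N by rewrite scale0r.
  by have := cd i; case: (i =P j) => [->|] /=; lia.
rewrite big1 // => i _; suff -> : d i = 0%N by rewrite scale0r.
by have := cd j; have := cd i; case: (i =P j) => [->|] /=; rewrite ?eqxx /=; lia.
Qed.

Lemma pos_root_neq0 x : pos x -> x != 0.
Proof. by case=> /(root_neq0 rs). Qed.

Lemma root_pos_or_neg x : x \in Phi -> pos x \/ pos (- x).
Proof.
move=> Px; case: ss => _ _ _ /(_ x Px) [] nx; [left | right] => //.
by split=> //; apply: rootN.
Qed.

Lemma pos_add_notin_simple a b : pos a -> pos b -> a + b \notin S.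
Proof.
move=> pa pb; apply/negP => /(nncomb_addS pa.2 pb.2) [a0|b0].
  by move: (pos_root_neq0 pa); rewrite a0 eqxx.
by move: (pos_root_neq0 pb); rewrite b0 eqxx.
Qed.

Lemma pos_sum_neq0 (T : eqType) (s : seq T) (F : T -> V) :
  s != [::] -> (forall p, p \in s -> pos (F p)) -> \sum_(p <- s) F p != 0.
Proof.
case: s => [//|q s] _ sF; rewrite big_cons.
have [q_root qS] := sF q (mem_head _ _).
have sS : nncomb S (\sum_(p <- s) F p).
  by apply: nncomb_sum => p ps; apply: (sF p _).2; rewrite inE ps orbT.
by apply: contraNneq (root_neq0 rs q_root) => /(nncomb_add_eq0 qS sS) ->.
Qed.

(* Some summand has positive inner product with the sum, so subtracting it
   leaves a root (it cannot leave 0, as the other summands are positive). *)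
Lemma pos_sum_peel (T : eqType) (s : seq T) (F : T -> V) :
  (1 < size s)%N -> (forall p, p \in s -> pos (F p)) ->
  pos (\sum_(p <- s) F p) ->
  exists2 p, p \in s & pos (\sum_(q <- rem p s) F q).
Proof.
move=> s_gt1 sF [x_root _]; set x := \sum_(p <- s) F p in x_root *.
have /hasP [p ps px_gt0] : has (fun p => 0 < dotv (F p) x) s.
  apply/negPn/negP => /hasPn s_le0.
  suff : \sum_(q <- s | q \in s) dotv (F q) x <= 0.
    by rewrite -big_seq -dotv_suml leNgt dotv_gt0 // (root_neq0 rs).
  by apply: sumr_le0 => q qs; rewrite leNgt s_le0.
exists p => //.
have rest_eq : x - F p = \sum_(q <- rem p s) F q.
  by rewrite /x (big_rem p) //= addrC addrK.
have rest_pos q : q \in rem p s -> pos (F q) by move/mem_rem; apply: sF.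
split; last by apply: nncomb_sum => q /rest_pos[].
rewrite dotvC in px_gt0.
rewrite -rest_eq; have [x_p0|//] := root_sub_dot_gt0 rs x_root (sF p ps).1 px_gt0.
have rest_ne : rem p s != [::].
  by rewrite -size_eq0 size_rem //; case: (size s) s_gt1 => [|[]].
by move: (pos_sum_neq0 rest_ne rest_pos); rewrite -rest_eq x_p0 eqxx.
Qed.

End SimpleSystem.

Section Chains.
Variables (R : realFieldType) (n : nat) (Phi S : seq 'rV[R]_n).
Hypotheses (rs : root_system Phi) (ss : simple_system Phi S).
Local Notation V := 'rV[R]_n.
Local Notation pos := (pos_roots Phi S).

Lemma IzE (J : nat -> V -> Prop) i v : (0 < i)%N -> Iz J i v <-> J i v.
Proof. by case: i. Qed.

Lemma JzE K (I : nat -> V -> Prop) m v :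
  (0 < m)%N -> Jz Phi S K I m v <-> pos v /\ ~ I (minn m K) v.
Proof. by case: m. Qed.

Lemma rdecomp1 K (J : nat -> V -> Prop) x i :
  (1 <= i <= K)%N -> J i x -> rdecomp K J x i.
Proof.
move=> iK Jx; exists [:: (x, i)]; rewrite !big_seq1; split=> // p.
by rewrite inE => /eqP ->.
Qed.

Lemma rval_exists K (J : nat -> V -> Prop) x t :
  rdecomp K J x t -> exists t0, rval K J x (Some t0).
Proof.
elim/ltn_ind: t => t IH dt.
have [[t' [t'_lt dt']]|t_min] := classic (exists t', (t' < t)%N /\ rdecomp K J x t').
  exact: IH dt'.
exists t; split=> // t' dt'; rewrite leqNgt; apply/negP => t'_lt.
by apply: t_min; exists t'.
Qed.

Lemma rdecomp_peel K (J : nat -> V -> Prop) x t :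
  (forall i v, (0 < i < t)%N -> J i v -> pos v) -> pos x -> rdecomp K J x t ->
  (1 <= t <= K)%N /\ J t x \/
  exists y i, [/\ (0 < i < t)%N, J i y, pos (x - y) & rdecomp K J (x - y) (t - i)].
Proof.
move=> Jpos px [s [s_ne sJ Ex Et]].
case: s s_ne sJ Ex Et => [//|p [|q s']] _ sJ Ex Et.
  by left; rewrite Ex Et !big_seq1; apply: sJ; rewrite mem_head.
right; set s := p :: q :: s' in sJ Ex Et.
have rem_ne u : u \in s -> rem u s != [::].
  by move=> us; rewrite -size_eq0 size_rem.
have rank_lt u : u \in s -> (u.2 < t)%N.
  move=> us; have Et' : (t = u.2 + \sum_(w <- rem u s) w.2)%N.
    by rewrite Et (big_rem u us).
  suff : (0 < \sum_(w <- rem u s) w.2)%N by lia.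
  have := rem_ne u us; case E: (rem u s) => [//|w r] _.
  have /sJ[/andP[w_gt0 _] _] : w \in s by apply: (@mem_rem _ u); rewrite E mem_head.
  by rewrite big_cons; apply: leq_trans w_gt0 (leq_addr _ _).
have spos u : u \in s -> pos u.1.
  by move=> us; have [/andP[u_gt0 _] Ju] := sJ u us; apply: Jpos Ju; rewrite u_gt0 rank_lt.
have psum : pos (\sum_(w <- s) w.1) by rewrite -Ex.
have [u us pos_rest] := pos_sum_peel rs ss (s := s) isT spos psum.
have [/andP[u_gt0 _] Ju] := sJ u us.
have x_u : x - u.1 = \sum_(w <- rem u s) w.1 by rewrite Ex (big_rem u us) /= addrC addrK.
exists u.1, u.2; split=> //; first by rewrite u_gt0 rank_lt.
  by rewrite x_u.
exists (rem u s); split; [exact: rem_ne | by move=> w /mem_rem; apply: sJ | done |].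
by rewrite Et (big_rem u us) /= addKn.
Qed.

Section Geometric.
Variables (K : nat) (I : nat -> V -> Prop).
Hypothesis Igeom : geometric_chain Phi S K I.

Lemma chain_pos i v : (1 <= i <= K)%N -> I i v -> pos v.
Proof. by case: Igeom => [[Iideal _] _ _] /Iideal[Ipos _]; apply: Ipos. Qed.

Lemma chain_mono i j v : (0 < i)%N -> (i <= j <= K)%N -> I i v -> I j v.
Proof.
move=> i_gt0 /andP[]; case: Igeom => [[_ Istep] _ _].
elim: j => [|j IH]; first by rewrite leqn0 => /eqP i0; rewrite i0 in i_gt0.
rewrite leq_eqVlt => /orP[/eqP <- //|ij] jK Iv.
by apply: Istep; [lia | lia | apply: IH => //; lia].
Qed.

Lemma rdecomp_chain x t : rdecomp K I x t -> pos x -> (t <= K)%N -> I t x.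
Proof.
elim/ltn_ind: t x => t IH x dx px tK.
have Ipos i v : (0 < i < t)%N -> I i v -> pos v.
  by move=> /andP[i_gt0 it]; apply: chain_pos; lia.
have [[] //|[y [i [/andP[i_gt0 it] Iy pxy dxy]]]] := rdecomp_peel Ipos px dx.
have Ixy : I (t - i) (x - y) by apply: IH dxy pxy _; lia.
have ti_gt0 : (0 < t - i)%N by rewrite subn_gt0.
have : Iz I (i + (t - i)) (y + (x - y)).
  case: Igeom => _ Gsum _; apply: Gsum; first by rewrite subnKC // (ltnW it).
  - exact: (IzE I y i_gt0).2 Iy.
  - exact: (IzE I (x - y) ti_gt0).2 Ixy.
  - by rewrite addrC subrK.
rewrite subnKC ?(ltnW it) // addrC subrK.
exact: (IzE I x (ltn_trans i_gt0 it)).1.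
Qed.

End Geometric.
End Chains.

Section Extension.
Variables (R : realFieldType) (n : nat) (Phi S : seq 'rV[R]_n).
Hypotheses (rs : root_system Phi) (ss : simple_system Phi S).
Local Notation V := 'rV[R]_n.
Local Notation pos := (pos_roots Phi S).
Variables (k : nat) (I : nat -> V -> Prop).
Hypotheses (k_gt0 : (0 < k)%N) (Igeom : geometric_chain Phi S k I).
Local Notation U := (underline_chain Phi S k I).

Lemma underline_chainE i v : (i <= k)%N -> U i v <-> I i v.
Proof. by move=> ik; rewrite /underline_chain ik. Qed.

Lemma Iz_underline_chainE i v : (i <= k)%N -> Iz U i v <-> Iz I i v.
Proof. by case: i => // i; apply: underline_chainE. Qed.

Lemma rdecomp_underline x t : rdecomp k I x t -> rdecomp k.+1 U x t.
Proof.
move=> [s [s_ne sI Ex Et]]; exists s; split=> // p /sI[/andP[p_gt0 pk] Ip].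
by rewrite p_gt0 ltnW //; split=> //; apply/underline_chainE.
Qed.

Lemma rdecomp_of_underline x t :
  rdecomp k.+1 U x t -> (t <= k)%N -> rdecomp k I x t.
Proof.
move=> [s [s_ne sU Ex Et]] tk; exists s; split=> // p ps.
have pk : (p.2 <= k)%N by apply: leq_trans tk; rewrite Et (big_rem p ps) leq_addr.
by have [/andP[p_gt0 _] /(underline_chainE _ pk) Ip] := sU p ps; rewrite p_gt0 pk.
Qed.

Lemma rval_of_underline x t :
  rval k.+1 U x (Some t) -> (t <= k)%N -> rval k I x (Some t).
Proof.
move=> [dx x_min] tk; split; first exact: rdecomp_of_underline.
by move=> t' /rdecomp_underline; apply: x_min.
Qed.

(* Either x is one of the new sums in the top ideal (minimality excludes I_k,
   and S is excluded by hypothesis), or a part of rank i <= k splits off and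
   the remainder lies in I_(k+1-i) by geometricity. *)
Lemma underline_top_split x : pos x -> x \notin S -> rval k.+1 U x (Some k.+1) ->
  exists gamma delta i,
    [/\ (0 < i <= k)%N, I i gamma, I (k.+1 - i) delta & x = gamma + delta].
Proof.
move=> px xS [dx x_min].
have Upos i v : (0 < i < k.+1)%N -> U i v -> pos v.
  move=> /andP[i_gt0 ik] /(underline_chainE _ ik) Iv.
  have iK : (0 < i <= k)%N by rewrite i_gt0.
  exact: (chain_pos Igeom iK Iv).
have [[_ Ux]|[y [i [/andP[i_gt0 ik] Uy pxy dxy]]]] := rdecomp_peel rs ss Upos px dx.
  move: Ux; rewrite /underline_chain ltnn eqxx.
  case=> [[i [j [gamma [delta [[ij ik jk] Igamma Idelta -> _]]]]]|[Ix|xS']].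
  - have i_gt0 : (0 < i)%N by case: i Igamma {ij ik}.
    have j_gt0 : (0 < j)%N by case: j Idelta {ij jk}.
    exists gamma, delta, i; rewrite i_gt0 ik -ij addKn.
    by split=> //; [apply/(IzE _ _ i_gt0) | apply/(IzE _ _ j_gt0)].
  - have kk : (0 < k <= k)%N by rewrite k_gt0 leqnn.
    by have := x_min k (rdecomp_underline (rdecomp1 kk Ix)); rewrite ltnn.
  - by rewrite xS' in xS.
have Iy : I i y by apply/(underline_chainE _ ik).
have ik' : (k.+1 - i <= k)%N by lia.
have Ixy := rdecomp_chain rs ss Igeom (rdecomp_of_underline dxy ik') pxy ik'.
by exists y, (x - y), i; split=> //; [rewrite i_gt0 | rewrite addrC subrK].
Qed.

Section Indecomposable.
Variables (r : nat) (alpha : V).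
Hypothesis ind : indecomposable Phi S k I r alpha.

Lemma indecomposable_pos : pos alpha.
Proof. by case: ind => r_range Ialpha _ _ _; apply: (chain_pos Igeom r_range Ialpha). Qed.

Section Complement.
Variables (i : nat) (beta gamma delta : V).
Hypotheses (i_range : (0 < i <= k)%N) (Igamma : I i gamma)
  (Idelta : I (k.+1 - i) delta) (pbeta : pos beta).

Lemma compl_mem_of_eq : alpha = gamma -> beta = delta -> I (k.+1 - r) beta.
Proof.
move=> Ealpha ->; have [/andP[r_gt0 rk] _ [_ alpha_min] _ _] := ind.
have ri : (r <= i)%N by apply: alpha_min; rewrite Ealpha; apply: rdecomp1.
by apply: (chain_mono Igeom _ _ Idelta); lia.
Qed.

Lemma compl_mem_of_above eta : pos eta ->
  gamma = alpha + eta -> beta = delta + eta -> I (k.+1 - r) beta.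
Proof.
move=> peta Egamma Ebeta; have [/andP[r_gt0 rk] _ _ _ alpha_sum] := ind.
have Ialpha_eta : I i (alpha + eta) by rewrite -Egamma.
have [t [dt t_min]] := rval_exists (rdecomp1 i_range Ialpha_eta).
have ti : (t <= i)%N by apply: t_min; apply: rdecomp1.
have Ieta : Iz I (t - r) eta.
  apply: alpha_sum peta (chain_pos Igeom i_range Ialpha_eta) (conj dt t_min) _.
  by apply: leq_trans ti _; case/andP: i_range.
have tr_gt0 : (0 < t - r)%N by case: (t - r)%N Ieta.
have [ki_gt0 t_gt0] : (0 < k.+1 - i)%N /\ (0 < t - r + (k.+1 - i))%N by lia.
have : Iz I (t - r + (k.+1 - i)) (eta + delta).
  case: Igeom => _ Gsum _; apply: Gsum Ieta _ _; first lia.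
    exact/(IzE _ _ ki_gt0).
  by rewrite addrC -Ebeta.
rewrite addrC -Ebeta => /(IzE _ _ t_gt0) Ibeta.
by apply: (chain_mono Igeom _ _ Ibeta); lia.
Qed.

Lemma compl_mem_of_below eta : pos eta ->
  alpha = gamma + eta -> delta = beta + eta -> I (k.+1 - r) beta.
Proof.
move=> peta Ealpha Edelta; have [/andP[r_gt0 rk] _ _ alpha_indec _] := ind.
have Ibeta : I (k.+1 - i) beta.
  case: Igeom => [[Iideal _] _ _]; have [_ Idown] : is_ideal Phi S (I (k.+1 - i)).
    by apply: Iideal; lia.
  by apply: Idown pbeta Idelta _; rewrite /root_le Edelta addrC addKr; case: peta.
have [ir|ri] := leqP (k.+1 - i) (k.+1 - r); first by apply: (chain_mono Igeom _ _ Ibeta); lia.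
(* otherwise i < r, and geometricity of the complements forbids beta outside I *)
apply: NNPP => notIbeta.
have notIeta : ~ I (r - i) eta.
  have [i_gt0 ri_gt0] : (0 < i)%N /\ (0 < r - i)%N by lia.
  move=> Ieta; apply: (alpha_indec i (r - i)%N); first lia.
  by exists gamma, eta; split=> //; [apply/(IzE _ _ i_gt0) | apply/(IzE _ _ ri_gt0)].
have Jeta : Jz Phi S k I (r - i) eta by apply/JzE; [lia | rewrite (minn_idPl _) //; lia].
have Jbeta : Jz Phi S k I (k.+1 - r) beta.
  by apply/JzE; [lia | rewrite (minn_idPl _) //; lia].
have ik_range : (0 < k.+1 - i <= k)%N by lia.
have pdelta : pos (eta + beta) by rewrite addrC -Edelta; apply: (chain_pos Igeom ik_range).
have [ri_k rk_k] : (r - i <= k)%N /\ (k.+1 - r <= k)%N by lia.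
case: Igeom => _ _ Gdiff; have := Gdiff _ _ _ _ ri_k rk_k Jeta Jbeta pdelta.
rewrite addrC -Edelta => /JzE[|_]; first lia.
by have -> : minn (r - i + (k.+1 - r)) k = (k.+1 - i)%N by lia.
Qed.

Lemma compl_mem_of_sub : alpha + beta = gamma + delta ->
  alpha - gamma = 0 \/ alpha - gamma \in Phi -> I (k.+1 - r) beta.
Proof.
move=> Esum [/subr0_eq Ealpha|/(root_pos_or_neg rs ss)[peta|peta]].
- by apply: compl_mem_of_eq => //; apply: (@addrI _ alpha); rewrite Esum Ealpha.
- apply: (compl_mem_of_below peta); first by rewrite addrC subrK.
  by rewrite addrA (addrC beta) Esum addrC addKr.
- rewrite opprB in peta; apply: (compl_mem_of_above peta); first by rewrite addrC subrK.
  by rewrite addrA (addrC delta) -Esum addrC addKr.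
Qed.

End Complement.

Lemma compl_mem_of_split i beta gamma delta :
  (0 < i <= k)%N -> I i gamma -> I (k.+1 - i) delta -> pos beta ->
  pos (alpha + beta) -> alpha + beta = gamma + delta -> I (k.+1 - r) beta.
Proof.
move=> i_range Igamma Idelta pbeta pab Esum; have [i_gt0 ik] := andP i_range.
have j_range : (0 < k.+1 - i <= k)%N by apply/andP; split; lia.
have Igamma' : I (k.+1 - (k.+1 - i)) gamma by rewrite subKn // leqW.
have by_gamma := compl_mem_of_sub i_range Igamma Idelta pbeta Esum.
have by_delta := compl_mem_of_sub j_range Idelta Igamma' pbeta (etrans Esum (addrC _ _)).
have oppr_root x : x = 0 \/ x \in Phi -> - x = 0 \/ - x \in Phi.
  by case=> [->|/(rootN rs)]; [left; rewrite oppr0 | right].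
have pa := indecomposable_pos.
have pg := chain_pos Igeom i_range Igamma; have pd := chain_pos Igeom j_range Idelta.
have := dotv_gt0 (pos_root_neq0 rs pab); rewrite {2}Esum dotvDl !dotvDr.
have [ag|ag] := ltP 0 (dotv alpha gamma).
  by move=> _; apply: by_gamma; exact: (root_sub_dot_gt0 rs pa.1 pg.1 ag).
have [ad|ad] := ltP 0 (dotv alpha delta).
  by move=> _; apply: by_delta; exact: (root_sub_dot_gt0 rs pa.1 pd.1 ad).
have [bd|bd] := ltP 0 (dotv beta delta).
  move=> _; apply: by_gamma; have -> : alpha - gamma = - (beta - delta).
    by rewrite opprB -[alpha](addrK beta) Esum addrAC (addrC gamma) addrK.
  by apply: oppr_root; exact: (root_sub_dot_gt0 rs pbeta.1 pd.1 bd).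
have [bg|bg] := ltP 0 (dotv beta gamma).
  move=> _; apply: by_delta; have -> : alpha - delta = - (beta - gamma).
    by rewrite opprB -[alpha](addrK beta) Esum addrAC addrK.
  by apply: oppr_root; exact: (root_sub_dot_gt0 rs pbeta.1 pg.1 bg).
by move=> /lt_le_trans/(_ (lerD (lerD ag ad) (lerD bg bd))); rewrite !addr0 ltxx.
Qed.

Lemma indecomposable_underline : indecomposable Phi S k.+1 U r alpha.
Proof.
have [r_range Ialpha [dalpha alpha_min] alpha_indec alpha_sum] := ind.
have [r_gt0 rk] := andP r_range.
split.
- by rewrite r_gt0 leqW.
- exact/(underline_chainE _ rk).
- split; first exact: rdecomp_underline.
  move=> t dt; have [tk|kt] := leqP t k; first exact: alpha_min (rdecomp_of_underline dt tk).
  by rewrite (leq_trans rk) // ltnW.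
- move=> i j ij [b [c [Ib Ic Ealpha]]]; apply: (alpha_indec i j ij).
  have [ik jk] : (i <= k)%N /\ (j <= k)%N by lia.
  by exists b, c; split=> //; [apply/(Iz_underline_chainE _ ik) | apply/(Iz_underline_chainE _ jk)].
- move=> beta t pbeta pab rv tk; have trk : (t - r <= k)%N by lia.
  apply/(Iz_underline_chainE _ trk).
  have [{}tk|kt] := leqP t k; first exact: alpha_sum pbeta pab (rval_of_underline rv tk) tk.
  have Et : t = k.+1 by lia.
  rewrite Et in rv *; have notS := pos_add_notin_simple rs ss indecomposable_pos pbeta.
  have [gamma [delta [i [i_range Igamma Idelta Esum]]]] := underline_top_split pab notS rv.
  have kr_gt0 : (0 < k.+1 - r)%N by lia.
  apply/(IzE _ _ kr_gt0).
  exact: (compl_mem_of_split i_range Igamma Idelta pbeta pab Esum).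
Qed.

End Indecomposable.
End Extension.

Theorem lemma13 (R : realFieldType) (n : nat) (Phi S : seq 'rV[R]_n)
  (k : nat) (I : nat -> 'rV[R]_n -> Prop) (r : nat) (alpha : 'rV[R]_n) :
  root_system Phi -> irreducible_rs Phi -> simple_system Phi S ->
  (0 < k)%N ->
  geometric_chain Phi S k I ->
  indecomposable Phi S k I r alpha ->
  indecomposable Phi S k.+1 (underline_chain Phi S k I) r alpha.
Proof.
move=> rs _ ss k_gt0 Igeom ind.
exact: (indecomposable_underline rs ss k_gt0 Igeom ind).
Qed.
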